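(* Let $F$ be a clause-set and $v$ a singular variable for $F$, with singular literal $x$, main clause $C$ and side clauses $D_1,\dots,D_m$. Let $C' := C\setminus\{x\}$ and $D_i' := D_i\setminus\{\overline{x}\}$. Then the following are equivalent: 1. $F$ is saturated minimally unsatisfiable. 2. All of the following hold: (a) $\mathrm{DP}_v(F)$ is saturated minimally unsatisfiable; (b) $C' = \bigcap_{i=1}^m D_i'$; (c) for every $E\in F$ with $v\notin\mathrm{var}(E)$ we have $C'\not\subseteq E$.
   Context: Literals are variables $v$ and complements $\overline{v}$; a clause is a finite set of literals with no complementary pair; a clause-set is a finite set of clauses; $\mathrm{var}(F)$ is the set of variables of $F$; $\mathrm{ldeg}_F(x)$ is the number of clauses of $F$ containing literal $x$. $\mathrm{DP}_v(F) := \{C \in F : v \notin \mathrm{var}(C)\} \cup \{(C \cup D)\setminus\{v,\overline{v}\} : C, D \in F,\ C \cap \overline{D} = \{v\}\}$. A clause-set is minimally unsatisfiable if it is unsatisfiable and each proper subset is satisfiable; a minimally unsatisfiable $F$ is saturated if for every $C \in F$ and every literal $y$ with $\mathrm{var}(y) \in \mathrm{var}(F)\setminus \mathrm{var}(C)$, the clause-set $(F\setminus\{C\})\cup\{C\cup\{y\}\}$ is satisfiable. A variable $v$ is singular for $F$ if $\min(\mathrm{ldeg}_F(v),\mathrm{ldeg}_F(\overline{v}))=1$; a singular literal for $v$ is a literal $x$ with $\mathrm{var}(x)=v$ and $\mathrm{ldeg}_F(x)=1$ (one chosen if both polarities qualify); the main clause is the clause containing $x$, the side clauses are the clauses containing $\overline{x}$.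 *)

From HB Require Import structures.
From mathcomp Require Import all_boot all_order.
From mathcomp Require Import finmap.
Set Implicit Arguments. Unset Strict Implicit. Unset Printing Implicit Defensive.
Local Open Scope fset_scope.

Section Clauses.
Variable V : choiceType.

(* A literal is a pair (v, b): (v, true) is the positive literal v,
   (v, false) is the complement  overline{v}. *)
Definition lit := (V * bool)%type.
Definition var (x : lit) : V := x.1.
Definition compl (x : lit) : lit := (x.1, ~~ x.2).
Definition pos (v : V) : lit := (v, true).
Definition neg (v : V) : lit := (v, false).

Definition clause := {fset lit}.
Definition cset := {fset clause}.

Definition is_clause (C : clause) : Prop := forall x, x \in C -> compl x \notin C.
Definition is_clause_set (F : cset) : Prop := forall C, C \in F -> is_clause C.

Definition varC (C : clause) : {fset V} := [fset var x | x in C].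
Definition varF (F : cset) : {fset V} := \bigcup_(C <- F) varC C.

Definition ldeg (F : cset) (x : lit) : nat := #|` [fset C in F | x \in C] |.

Definition complC (D : clause) : clause := [fset compl x | x in D].

Definition DP (v : V) (F : cset) : cset :=
  [fset C in F | v \notin varC C] `|`
  [fset (C `|` D) `\` [fset pos v; neg v]
     | C in F, D in [fset D in F | C `&` complC D == [fset pos v]]].

Definition satisfies (phi : V -> bool) (F : cset) : Prop :=
  forall C, C \in F -> exists2 x, x \in C & phi (var x) = x.2.
Definition satisfiable (F : cset) : Prop := exists phi, satisfies phi F.

Definition minimally_unsat (F : cset) : Prop :=
  ~ satisfiable F /\ forall G : cset, G `<` F -> satisfiable G.

Definition saturated_MU (F : cset) : Prop :=
  minimally_unsat F /\
  forall C y, C \in F -> var y \in varF F -> var y \notin varC C ->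
    satisfiable ((F `\ C) `|` [fset C `|` [fset y]]).

Definition singular (F : cset) (v : V) : Prop :=
  minn (ldeg F (pos v)) (ldeg F (neg v)) = 1%N.

End Clauses.

From mathcomp Require Import all_boot all_order.
From mathcomp Require Import finmap.
Set Implicit Arguments. Unset Strict Implicit. Unset Printing Implicit Defensive.
Local Open Scope fset_scope.

(* Write [strip v E] for [E] without its [v]-literals, so that [C' = strip v C] and
   [D' = strip v D]; condition (b) says [C' <= D'] for every side clause [D] together
   with the reverse inclusion of the intersection.  Given [C' <= D'], the resolvent of
   [C] and [D] on [v] is [D'], so [DP_v(F)] is the image of [F \ {C}] under [strip v],
   and (c) makes this map injective.  Assignments then pass between the two sides
   clause by clause: by soundness of resolution a model of [F \ {K}] satisfies
   [DP_v(F) \ {strip v K}], and conversely a model of [DP_v(F) \ {strip v K}] satisfies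
   [F \ {K}] once [x] is made true (or [compl x] when [K = C]).  Minimal
   unsatisfiability and saturation are both statements about such removals, so they
   transfer; (b) and (c) follow from saturation of [F], since otherwise an assignment
   falsifying a single clause of [F] would extend to a model of [F]. *)

Section Clauses.
Variable V : choiceType.
Implicit Types (F G : cset V) (E K : clause V) (phi : V -> bool) (y z : lit V) (w : V).

Definition sat_clause phi E := exists2 z, z \in E & phi (var z) = z.2.

(* [DP] writes the resolvent of [C] and [D] on [w] as [strip w (C `|` D)]. *)
Definition strip w E : clause V := E `\` [fset pos w; neg w].

Definition setlit phi y : V -> bool := fun w => if w == var y then y.2 else phi w.

Lemma complK : involutive (@compl V).
Proof. by case=> a b; rewrite /compl /= negbK. Qed.

Lemma var_eq_lit y z : var z = var y -> z = y \/ z = compl y.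
Proof. by case: y z => a b [c d] /= ->; case: b; case: d; auto. Qed.

Lemma in_complC E z : (z \in complC E) = (compl z \in E).
Proof.
apply/imfsetP/idP => [[u uE ->]|zE]; first by rewrite complK.
by exists (compl z); rewrite ?complK.
Qed.

Lemma varCP w E : reflect (exists2 z, z \in E & var z = w) (w \in varC E).
Proof.
apply: (iffP idP) => [/imfsetP [z /= zE ->]|[z zE <-]]; first by exists z.
by apply/imfsetP; exists z.
Qed.

Lemma mem_varC z E : z \in E -> var z \in varC E.
Proof. by move=> zE; apply/varCP; exists z. Qed.

Lemma varFP w F : reflect (exists2 E, E \in F & w \in varC E) (w \in varF F).
Proof.
apply: (iffP idP) => [/bigfcupP [E /andP[EF _] wE]|[E EF wE]]; first by exists E.
by apply/bigfcupP; exists E; rewrite ?EF.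
Qed.

Lemma in_strip w E z : (z \in strip w E) = (var z != w) && (z \in E).
Proof. by case: z => a [] /=; rewrite !inE /pos /neg /= ?xpair_eqE /= ?andbT ?andbF ?orbF. Qed.

Lemma strip_id w E : w \notin varC E -> strip w E = E.
Proof.
move=> wE; apply/fsetP => z; rewrite in_strip andb_idl // => zE.
by apply: contraNneq wE => <-; apply: mem_varC.
Qed.

Lemma varC_strip u w E : (u \in varC (strip w E)) = (u != w) && (u \in varC E).
Proof.
apply/varCP/andP => [[z]|[uw /varCP[z zE zu]]].
  by rewrite in_strip => /andP[zw zE] <-; rewrite zw mem_varC.
by exists z; rewrite // in_strip zu uw.
Qed.

Lemma strip_var y E : compl y \notin E -> strip (var y) E = E `\ y.
Proof.
move=> yE; apply/fsetP => z; rewrite in_strip in_fsetD1.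
case: (eqVneq (var z) (var y)) => [/var_eq_lit[]->|zy]; rewrite ?eqxx //=.
  by rewrite (negbTE yE) andbF.
suff -> : z != y by [].
by apply: contra_neq zy => ->.
Qed.

Lemma sat_clause_sub phi E K : E `<=` K -> sat_clause phi E -> sat_clause phi K.
Proof. by move=> /fsubsetP EK [z zE zphi]; exists z; first exact: EK. Qed.

Lemma sat_clause_strip phi w E :
  sat_clause phi E -> (w, phi w) \notin E -> sat_clause phi (strip w E).
Proof.
move=> [[u b] zE /= ub] wE; exists (u, b); rewrite // in_strip zE andbT /=.
by apply: contraNneq wE => uw; rewrite -uw ub.
Qed.

Lemma setlit_var phi y : setlit phi y (var y) = y.2.
Proof. by rewrite /setlit eqxx. Qed.

Lemma setlit_other phi y w : w != var y -> setlit phi y w = phi w.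
Proof. by rewrite /setlit => /negbTE->. Qed.

Lemma satisfies_setlit phi y G :
  (forall E, E \in G -> y \in E \/ sat_clause phi (strip (var y) E)) ->
  satisfies (setlit phi y) G.
Proof.
move=> H E /H[yE|[z]]; first by exists y; rewrite ?setlit_var.
by rewrite in_strip => /andP[zy zE] zphi; exists z; rewrite ?setlit_other.
Qed.

Lemma varC_neq w E K : w \notin varC E -> w \in varC K -> E != K.
Proof. by move=> wE wK; apply: contraNneq wE => ->. Qed.

Lemma lit_of_var phi y : phi (var y) = y.2 -> (var y, phi (var y)) = y.
Proof. by case: y => a b /= ->. Qed.

Lemma unsat_remove phi F K :
  ~ satisfiable F -> K \in F -> satisfies phi (F `\ K) -> ~ sat_clause phi K.
Proof.
move=> unsatF KF phiFK phiK; apply: unsatF; exists phi => E EF.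
by case: (eqVneq E K) => [-> //|EK]; apply: phiFK; rewrite in_fsetD1 EK.
Qed.

Lemma mu_remove F K : minimally_unsat F -> K \in F -> satisfiable (F `\ K).
Proof. by move=> [_ muF] KF; apply/muF/fproperD1. Qed.

Lemma mu_intro F :
  ~ satisfiable F -> (forall K, K \in F -> satisfiable (F `\ K)) -> minimally_unsat F.
Proof.
move=> unsatF satFK; split=> // G; rewrite fproperE => /andP[GF /fsubsetPn[K KF KG]].
have [phi phiFK] := satFK K KF; exists phi => E EG; apply: phiFK.
by rewrite in_fsetD1 (fsubsetP GF _ EG) andbT; apply: contraNneq KG => <-.
Qed.

Lemma satisfiable_add_lit phi F K y : satisfies phi (F `\ K) -> phi (var y) = y.2 ->
  satisfiable ((F `\ K) `|` [fset K `|` [fset y]]).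
Proof.
move=> phiFK phiy; exists phi => E; rewrite in_fsetU in_fset1 => /orP[/phiFK //|/eqP->].
by exists y; rewrite // in_fsetU in_fset1 eqxx orbT.
Qed.

(* If [compl y \in K] this is forced by minimal unsatisfiability, otherwise it is
   saturation at [K] and [y]. *)
Lemma saturated_remove_lit F K y : saturated_MU F -> K \in F -> y \notin K ->
  var y \in varF F -> exists2 phi, satisfies phi (F `\ K) & phi (var y) = y.2.
Proof.
move=> [[unsatF muF] satF] KF yK yF.
case: (boolP (var y \in varC K)) => [/varCP[z zK /var_eq_lit[zy|zy]]|yvK].
- by rewrite -zy zK in yK.
- have [phi phiFK] := mu_remove (conj unsatF muF) KF; exists phi => //.
  apply/eqP; case: eqP => // phiy; case: (unsat_remove unsatF KF phiFK).
  by exists z; rewrite // zy /=; case: (phi _) phiy; case: (y.2).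
- have [phi phiFK'] := satF K y KF yF yvK.
  have phiFK : satisfies phi (F `\ K) by move=> E EF; apply: phiFK'; rewrite in_fsetU EF.
  exists phi => //; have := phiFK' (K `|` [fset y]).
  rewrite in_fsetU in_fset1 eqxx orbT => /(_ isT)[z]; rewrite in_fsetU in_fset1.
  case/orP=> [zK phiz|/eqP-> //]; exfalso.
  by apply: (unsat_remove unsatF KF phiFK); exists z.
Qed.

Lemma clash_swap E K y : E `&` complC K = [fset y] -> K `&` complC E = [fset compl y].
Proof.
move=> EKy; apply/fsetP => z; have := congr1 (fun S => compl z \in S) EKy.
rewrite /= !in_fsetI !in_complC complK !in_fset1 andbC => ->.
by rewrite -(inj_eq (can_inj complK)) complK.
Qed.

Lemma pos_var y : pos (var y) = if y.2 then y else compl y.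
Proof. by case: y => a []. Qed.

Lemma mem_DP F y K : K \in DP (var y) F <->
  (K \in F /\ var y \notin varC K) \/
  exists E1 E2, [/\ E1 \in F, E2 \in F, E1 `&` complC E2 = [fset y]
                  & K = strip (var y) (E1 `|` E2)].
Proof.
rewrite /DP in_fsetU !inE /=.
split=> [/orP[/andP[KF yK]|/imfset2P[E1 E1F [E2]]]|[[KF yK]|[E1 [E2 [E1F E2F E12 ->]]]]].
- by left.
- rewrite !inE /= => /andP[E2F /eqP E12] ->; right; rewrite pos_var in E12.
  case: ifP E12 => _ E12; first by exists E1, E2.
  exists E2, E1; split=> //; last by rewrite fsetUC.
  by rewrite -[y]complK; apply: clash_swap.
- by rewrite KF yK.
- apply/orP; right; apply/imfset2P; have := pos_var y.
  case: ifP => _ posy; first by exists E1 => //; exists E2; rewrite // !inE E2F posy E12 eqxx.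
  exists E2 => //; exists E1; last by rewrite fsetUC.
  by rewrite !inE E1F posy (clash_swap E12) eqxx.
Qed.

End Clauses.

Section SingularVariable.
Variables (V : choiceType) (F : cset V) (x : lit V) (C : clause V).
Hypotheses (clF : is_clause_set F) (singF : singular F (var x)) (degx : ldeg F x = 1%N)
  (CF : C \in F) (xC : x \in C).
Implicit Types (D E K : clause V) (phi : V -> bool) (y z : lit V).
Local Notation v := (var x).

Lemma main_clause_unique K : K \in F -> x \in K -> K = C.
Proof.
have /cardfs1P[E0 E0E] : ldeg F x == 1%N by apply/eqP.
have inE0 K' : K' \in F -> x \in K' -> K' = E0.
  by move=> K'F xK'; apply/fset1P; rewrite -E0E !inE K'F xK'.
by move=> KF xK; rewrite (inE0 K KF xK) (inE0 C CF xC).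
Qed.

Lemma compl_x_notin_main : compl x \notin C.
Proof. exact: clF CF x xC. Qed.

Lemma side_clause_exists : exists2 D, D \in F & compl x \in D.
Proof.
have : (0 < ldeg F (compl x))%N.
  move: singF; rewrite /singular; case: x => a [] /= <-; [exact: geq_minr | exact: geq_minl].
by rewrite /ldeg cardfs_gt0 => /fset0Pn[D]; rewrite !inE => /andP[DF cxD]; exists D.
Qed.

Lemma x_notin_side D : D \in F -> compl x \in D -> x \notin D.
Proof.
move=> DF cxD; apply/negP => xD.
by move: cxD; rewrite (main_clause_unique DF xD) (negbTE compl_x_notin_main).
Qed.

Lemma side_in_FC D : D \in F -> compl x \in D -> D \in F `\ C.
Proof.
move=> DF cxD; rewrite in_fsetD1 DF andbT.
by apply: contraTneq cxD => ->; exact: compl_x_notin_main.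
Qed.

Lemma clause_cases K : K \in F -> [\/ K = C, compl x \in K | v \notin varC K].
Proof.
move=> KF; case: (boolP (v \in varC K)) => [|]; last by constructor 3.
case/varCP=> z zK /var_eq_lit[]zx.
- by constructor 1; apply: main_clause_unique KF _; rewrite -zx.
- by constructor 2; rewrite -zx.
Qed.

Lemma strip_main : strip v C = C `\ x.
Proof. by apply: strip_var; exact: compl_x_notin_main. Qed.

Lemma strip_side D : D \in F -> compl x \in D -> strip v D = D `\ compl x.
Proof. by move=> DF cxD; apply: (@strip_var _ (compl x)); rewrite complK x_notin_side. Qed.

Lemma strip_main_sub_side D :
  saturated_MU F -> D \in F -> compl x \in D -> strip v C `<=` strip v D.
Proof.
move=> satF DF cxD; have [[unsatF _] _] := satF.
apply/fsubsetP => y; rewrite !in_strip => /andP[yv yC]; rewrite yv /=.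
apply/negPn/negP => yD.
have yF : var y \in varF F by apply/varFP; exists C => //; exact: mem_varC.
have [phi phiFD phiy] := saturated_remove_lit satF DF yD yF.
apply: unsatF; exists (setlit phi (compl x)); apply: satisfies_setlit => E EF.
case: (clause_cases EF) => [->|cxE|vE]; [right|by left|right].
- by exists y; rewrite // in_strip yv.
- rewrite strip_id //; apply: phiFD.
  by rewrite in_fsetD1 EF (varC_neq vE (mem_varC cxD)).
Qed.

Lemma side_inter_sub_main y : saturated_MU F ->
  (forall D, D \in F -> compl x \in D -> y \in strip v D) -> y \in strip v C.
Proof.
move=> satF yD; have [[unsatF _] _] := satF; have [D0 D0F cxD0] := side_clause_exists.
have := yD D0 D0F cxD0; rewrite !in_strip => /andP[yv yD0]; rewrite yv /=.
apply/negPn/negP => yC.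
have yF : var y \in varF F by apply/varFP; exists D0 => //; exact: mem_varC.
have [phi phiFC phiy] := saturated_remove_lit satF CF yC yF.
apply: unsatF; exists (setlit phi x); apply: satisfies_setlit => E EF.
case: (clause_cases EF) => [->|cxE|vE]; [by left|right|right].
- by exists y; first exact: yD.
- rewrite strip_id //; apply: phiFC.
  by rewrite in_fsetD1 EF (varC_neq vE (mem_varC xC)).
Qed.

Lemma strip_main_not_sub E :
  saturated_MU F -> E \in F -> v \notin varC E -> ~ strip v C `<=` E.
Proof.
move=> satF EF vE CE; have [[unsatF _] _] := satF.
have cxE : compl x \notin E by apply: contra vE; exact: mem_varC.
have vF : var (compl x) \in varF F by apply/varFP; exists C => //; exact: mem_varC xC.
have [phi phiFE phiv] := saturated_remove_lit satF EF cxE vF.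
apply: (unsat_remove unsatF EF phiFE); apply: sat_clause_sub CE _.
apply: sat_clause_strip; last by rewrite (lit_of_var phiv) compl_x_notin_main.
by apply: phiFE; rewrite in_fsetD1 CF andbT eq_sym (varC_neq vE (mem_varC xC)).
Qed.

Lemma strip_main_inter_iff :
  (forall y, y \in strip v C <->
     (forall D, D \in F -> compl x \in D -> y \in D `\ compl x)) <->
  (forall D, D \in F -> compl x \in D -> strip v C `<=` strip v D) /\
  (forall y, (forall D, D \in F -> compl x \in D -> y \in strip v D) -> y \in strip v C).
Proof.
split=> [Hy|[subCD interC] y]; [split=> [D DF cxD|y yD] | split=> [yC D DF cxD|yD]].
- by apply/fsubsetP => y /Hy/(_ D DF cxD); rewrite strip_side.
- by apply/Hy => D DF cxD; rewrite -strip_side //; exact: yD.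
- by rewrite -strip_side //; exact: (fsubsetP (subCD D DF cxD)).
- by apply: interC => D DF cxD; rewrite strip_side //; exact: yD.
Qed.

Section Resolution.
Hypothesis subCD : forall D, D \in F -> compl x \in D -> strip v C `<=` strip v D.

Lemma clash_main_side D : D \in F -> compl x \in D -> C `&` complC D = [fset x].
Proof.
move=> DF cxD; apply/fsetP => z; rewrite in_fsetI in_complC in_fset1.
apply/andP/eqP => [[zC czD]|->]; last by rewrite xC.
case: (eqVneq (var z) v) => [/var_eq_lit[] // zcx|zv].
  by rewrite zcx (negbTE compl_x_notin_main) in zC.
have : z \in strip v D by apply: (fsubsetP (subCD DF cxD)); rewrite in_strip zv.
by rewrite in_strip => /andP[_ zD]; have := clF DF zD; rewrite czD.
Qed.

Lemma strip_resolvent D : D \in F -> compl x \in D -> strip v (C `|` D) = strip v D.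
Proof.
move=> DF cxD; apply/fsetP => z; rewrite !in_strip in_fsetU andb_orr -!in_strip.
apply/orP/idP => [[zC|//]|]; last by right.
exact: (fsubsetP (subCD DF cxD)).
Qed.

Lemma mem_DP_singular K : K \in DP v F <-> exists2 E, E \in F `\ C & K = strip v E.
Proof.
rewrite mem_DP; split=> [[[KF vK]|[E1 [E2 [E1F E2F E12 ->]]]]|[E]].
- exists K; last by rewrite strip_id.
  by rewrite in_fsetD1 KF andbT (varC_neq vK (mem_varC xC)).
- have : x \in E1 `&` complC E2 by rewrite E12 in_fset1.
  rewrite in_fsetI in_complC => /andP[xE1 cxE2].
  rewrite (main_clause_unique E1F xE1) strip_resolvent //.
  by exists E2; first exact: side_in_FC.
- rewrite in_fsetD1 => /andP[EC EF] ->; case: (clause_cases EF) => [EC'|cxE|vE].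
  + by rewrite EC' eqxx in EC.
  + by right; exists C, E; rewrite strip_resolvent //; split=> //; exact: clash_main_side.
  + by left; rewrite strip_id.
Qed.

Lemma strip_in_DP E : E \in F `\ C -> strip v E \in DP v F.
Proof. by move=> EFC; apply/mem_DP_singular; exists E. Qed.

Lemma varF_DP w : (w \in varF (DP v F)) = (w != v) && (w \in varF F).
Proof.
apply/varFP/andP => [[K /mem_DP_singular[E] + ->]|[wv /varFP[E EF /varCP[z zE zw]]]].
  rewrite in_fsetD1 varC_strip => /andP[_ EF] /andP[wv wE].
  by split=> //; apply/varFP; exists E.
have zE' : z \in strip v E by rewrite in_strip zw wv.
have [K KDP zK] : exists2 K, K \in DP v F & z \in K.
  case: (eqVneq E C) => [EC|EC]; last first.
    by exists (strip v E); rewrite // strip_in_DP // in_fsetD1 EC.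
  have [D0 D0F cxD0] := side_clause_exists.
  exists (strip v D0); first by apply/strip_in_DP/side_in_FC.
  by apply: (fsubsetP (subCD D0F cxD0)); rewrite -EC.
by exists K; rewrite // -zw mem_varC.
Qed.

(* For a side clause [E], [strip v E] is the resolvent of [C] and [E]: this is
   soundness of resolution. *)
Lemma sat_clause_DP phi E :
  E \in F `\ C -> sat_clause phi C -> sat_clause phi E -> sat_clause phi (strip v E).
Proof.
rewrite in_fsetD1 => /andP[EC EF] phiC phiE.
case: (clause_cases EF) => [EC'|cxE|vE]; last by rewrite strip_id.
  by rewrite EC' eqxx in EC.
case: (eqVneq (phi v) x.2) => [phiv|phiv].
  by apply: sat_clause_strip phiE _; rewrite (lit_of_var phiv) x_notin_side.
have phicx : phi (var (compl x)) = (compl x).2.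
  by move: phiv; rewrite /=; case: (phi v); case: (x.2).
apply: sat_clause_sub (subCD EF cxE) _; apply: sat_clause_strip phiC _.
by rewrite (lit_of_var phicx) compl_x_notin_main.
Qed.

Lemma satisfies_DP phi : satisfies phi F -> satisfies phi (DP v F).
Proof.
move=> phiF _ /mem_DP_singular[E EFC ->]; apply: sat_clause_DP (phiF _ CF) _ => //.
by apply: phiF; move: EFC; rewrite in_fsetD1 => /andP[].
Qed.

Lemma satisfies_DP_remove phi K :
  K \in F `\ C -> satisfies phi (F `\ K) -> satisfies phi (DP v F `\ strip v K).
Proof.
move=> KFC phiFK E'; rewrite in_fsetD1 => /andP[EK /mem_DP_singular[E EFC E'E]].
subst E'; have := EFC; rewrite !in_fsetD1 => /andP[_ EF].
have /andP[KC _] : (K != C) && (K \in F) by rewrite -in_fsetD1.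
apply: (sat_clause_DP EFC); apply: phiFK; rewrite in_fsetD1 ?CF ?EF andbT.
  by rewrite eq_sym.
by apply: contraNneq EK => ->.
Qed.

Lemma saturated_DP : saturated_MU F -> saturated_MU (DP v F).
Proof.
move=> satF; have [[unsatF muF] _] := satF.
have unsatDP : ~ satisfiable (DP v F).
  move=> [phi phiDP]; apply: unsatF; exists (setlit phi x); apply: satisfies_setlit => E EF.
  case: (eqVneq E C) => [->|EC]; [by left | right].
  by apply: phiDP; rewrite strip_in_DP // in_fsetD1 EC.
split.
  apply: mu_intro => // _ /mem_DP_singular[E EFC ->].
  have [phi phiFE] := mu_remove (conj unsatF muF) (fsubsetP (fsubD1set F C) _ EFC).
  by exists phi; apply: satisfies_DP_remove.
move=> _ y /mem_DP_singular[E EFC ->]; rewrite varF_DP varC_strip => /andP[yv yF].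
rewrite yv /= => yE.
have EF : E \in F by move: EFC; rewrite in_fsetD1 => /andP[].
have [|phi phiFE phiy] := saturated_remove_lit satF EF _ yF.
  by apply: contra yE; exact: mem_varC.
exact: satisfiable_add_lit (satisfies_DP_remove EFC phiFE) phiy.
Qed.

Section Reconstruction.
Hypothesis notsubC : forall E, E \in F -> v \notin varC E -> ~ strip v C `<=` E.

Lemma strip_side_neq D E :
  D \in F -> compl x \in D -> E \in F -> v \notin varC E -> strip v D != E.
Proof.
move=> DF cxD EF vE; apply/eqP => DE.
by apply: (notsubC EF vE); rewrite -DE; exact: subCD.
Qed.

Lemma strip_inj : {in F `\ C &, injective (strip v)}.
Proof.
move=> E1 E2; rewrite !in_fsetD1 => /andP[E1C E1F] /andP[E2C E2F] e12.
case: (clause_cases E1F) => [/eqP|cx1|v1]; first by rewrite (negbTE E1C).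
all: case: (clause_cases E2F) => [/eqP|cx2|v2]; first by rewrite (negbTE E2C).
- by rewrite -(fsetD1K cx1) -(fsetD1K cx2) -!strip_side ?e12.
- by case/eqP: (strip_side_neq E1F cx1 E2F v2); rewrite e12 strip_id.
- by case/eqP: (strip_side_neq E2F cx2 E1F v1); rewrite -e12 strip_id.
- by rewrite -(strip_id v1) -(strip_id v2).
Qed.

Lemma strip_in_DP_remove E K :
  E \in F `\ C -> K \in F `\ C -> E != K -> strip v E \in DP v F `\ strip v K.
Proof. by move=> EFC KFC EK; rewrite in_fsetD1 (inj_in_eq strip_inj) // EK strip_in_DP. Qed.

Lemma lift_remove phi K : K \in F `\ C ->
  satisfies phi (DP v F `\ strip v K) -> satisfies (setlit phi x) (F `\ K).
Proof.
move=> KFC phiDK; apply: satisfies_setlit => E; rewrite in_fsetD1 => /andP[EK EF].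
case: (eqVneq E C) => [->|EC]; [by left | right].
by apply: phiDK; apply: strip_in_DP_remove; rewrite // in_fsetD1 EC.
Qed.

Lemma lift_remove_main phi D : D \in F -> compl x \in D ->
  satisfies phi (DP v F `\ strip v D) -> satisfies (setlit phi (compl x)) (F `\ C).
Proof.
move=> DF cxD phiDD; apply: satisfies_setlit => E; rewrite in_fsetD1 => /andP[EC EF].
case: (clause_cases EF) => [/eqP|cxE|vE]; [by rewrite (negbTE EC) | by left | right].
apply: phiDD; apply: strip_in_DP_remove; [by rewrite in_fsetD1 EC | exact: side_in_FC |].
exact: varC_neq vE (mem_varC cxD).
Qed.

Lemma mu_of_mu_DP : minimally_unsat (DP v F) -> minimally_unsat F.
Proof.
move=> muDP; have [unsatDP _] := muDP.
apply: mu_intro => [[phi /satisfies_DP phiDP]|K KF]; first by apply: unsatDP; exists phi.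
case: (eqVneq K C) => [->|KC].
  have [D0 D0F cxD0] := side_clause_exists.
  have [phi phiD] := mu_remove muDP (strip_in_DP (side_in_FC D0F cxD0)).
  by exists (setlit phi (compl x)); exact: lift_remove_main phiD.
have KFC : K \in F `\ C by rewrite in_fsetD1 KC.
have [phi phiD] := mu_remove muDP (strip_in_DP KFC).
by exists (setlit phi x); exact: lift_remove phiD.
Qed.

Lemma saturate_main y :
  ((forall D, D \in F -> compl x \in D -> y \in strip v D) -> y \in strip v C) ->
  saturated_MU (DP v F) -> var y \in varF F -> var y \notin varC C ->
  satisfiable ((F `\ C) `|` [fset C `|` [fset y]]).
Proof.
move=> interC satDP yF yC.
have yv : var y != v by apply: contraNneq yC => ->; exact: mem_varC xC.
have /allPn[D1 D1F] : ~~ all (fun D => (compl x \in D) ==> (y \in strip v D)) F.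
  apply: contra yC => /allP yD.
  have := interC (fun D DF => implyP (yD D DF)).
  by rewrite in_strip => /andP[_ /mem_varC].
rewrite negb_imply => /andP[cxD1 yD1].
have yDP : var y \in varF (DP v F) by rewrite varF_DP yv.
have D1DP : strip v D1 \in DP v F by apply/strip_in_DP/side_in_FC.
have [phi phiD phiy] := saturated_remove_lit satDP D1DP yD1 yDP.
apply: satisfiable_add_lit (lift_remove_main D1F cxD1 phiD) _.
by rewrite setlit_other.
Qed.

Lemma saturate_other K y : K \in F `\ C ->
  saturated_MU (DP v F) -> var y \in varF F -> var y \notin varC K ->
  satisfiable ((F `\ K) `|` [fset K `|` [fset y]]).
Proof.
move=> KFC satDP yF yK; have [muDP _] := satDP; have KDP := strip_in_DP KFC.
case: (eqVneq (var y) v) yK => [/var_eq_lit[]-> yK|yv yK].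
- have [phi phiD] := mu_remove muDP KDP.
  exact: satisfiable_add_lit (lift_remove KFC phiD) (setlit_var _ _).
- (* Making [compl x] true, [C] needs a literal of [strip v C] outside [K]: this is (c). *)
  have vK : v \notin varC K by [].
  have /fsubsetPn[z zC zK] : ~~ (strip v C `<=` K).
    by apply/negP; apply: notsubC vK; move: KFC; rewrite in_fsetD1 => /andP[].
  have zDP : var z \in varF (DP v F).
    move: zC; rewrite in_strip varF_DP => /andP[-> zC].
    by apply/varFP; exists C => //; exact: mem_varC.
  have [|phi phiD phiz] := saturated_remove_lit satDP KDP _ zDP; first by rewrite strip_id.
  apply: satisfiable_add_lit _ (setlit_var phi (compl x)); apply: satisfies_setlit => E.
  rewrite in_fsetD1 => /andP[EK EF].
  case: (clause_cases EF) => [->|cxE|vE]; [by right; exists z | by left | right].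
  apply: phiD; apply: strip_in_DP_remove => //.
  by rewrite in_fsetD1 EF andbT (varC_neq vE (mem_varC xC)).
have yK' : y \notin strip v K by apply: contra yK; rewrite in_strip => /andP[_ /mem_varC].
have yDP : var y \in varF (DP v F) by rewrite varF_DP yv.
have [phi phiD phiy] := saturated_remove_lit satDP KDP yK' yDP.
by apply: satisfiable_add_lit (lift_remove KFC phiD) _; rewrite setlit_other.
Qed.

Lemma saturated_of_DP :
  (forall y, (forall D, D \in F -> compl x \in D -> y \in strip v D) -> y \in strip v C) ->
  saturated_MU (DP v F) -> saturated_MU F.
Proof.
move=> interC satDP; split; first exact: mu_of_mu_DP (proj1 satDP).
move=> K y KF yF; case: (eqVneq K C) => [->|KC] yK.
  exact: saturate_main (interC y) satDP yF yK.
by apply: saturate_other; rewrite ?in_fsetD1 ?KC.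
Qed.

End Reconstruction.
End Resolution.

Theorem saturated_MU_singularE :
  saturated_MU F <->
  [/\ saturated_MU (DP v F),
      (forall y, y \in C `\ x <->
         (forall D, D \in F -> compl x \in D -> y \in D `\ compl x))
    & (forall E, E \in F -> v \notin varC E -> ~ (C `\ x `<=` E))].
Proof.
rewrite -strip_main.
split=> [satF | [satDP /strip_main_inter_iff[subCD interC] notsubC]].
  have subCD := strip_main_sub_side satF.
  split; [exact: saturated_DP | apply/strip_main_inter_iff; split=> // y |].
    exact: side_inter_sub_main.
  by move=> E; apply: strip_main_not_sub.
exact: saturated_of_DP.
Qed.

End SingularVariable.

Theorem lemma12 (V : choiceType) (F : cset V) (v : V) (x : lit V) (C : clause V) :
  is_clause_set F ->
  singular F v ->
  var x = v ->
  ldeg F x = 1%N ->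
  C \in F -> x \in C ->
  (saturated_MU F <->
   [/\ saturated_MU (DP v F),
       (forall y, y \in C `\ x <->
          (forall D, D \in F -> compl x \in D -> y \in D `\ compl x))
     & (forall E, E \in F -> v \notin varC E -> ~ (C `\ x `<=` E))]).
Proof. by move=> clF singF xv; subst v; apply: saturated_MU_singularE. Qed.
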